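(* Let $0<p<\infty$ be such that $p$ is not an even integer, and let $k=\lceil p/2\rceil$. Then $\sum_{j=0}^{k-1}\binom{2k}{j}(-1)^j(k-j)^p\neq 0.$ *)

From Stdlib Require Import Reals.
Open Scope R_scope.

(* ceiling of a real x, characterised as the natural number k with k-1 < x <= k
   (used only for x > 0, where it is a natural number) *)
Definition is_ceil_nat (x : R) (k : nat) : Prop := INR k - 1 < x /\ x <= INR k.

Definition is_even_integer (p : R) : Prop := exists m : Z, p = 2 * IZR m.

(* S_p = sum_{j=0}^{k-1} C(2k,j) (-1)^j (k-j)^p ; (k-j) >= 1 so Rpower is the real power *)
Definition ceil_sum (p : R) (k : nat) : R :=
  sum_f 0 (k - 1) (fun j => C (2 * k) j * (-1) ^ j * Rpower (INR k - INR j) p).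

From Stdlib Require Import Reals Lra Lia IndefiniteDescription.
Open Scope R_scope.

(* As a function of p, S(p) = sum_{j<k} C(2k,j) (-1)^j (k-j)^p is an exponential
   sum with k nonzero coefficients and distinct rates ln (k-j).  Dividing by
   the first exponential and differentiating removes one term and, by Rolle,
   at most one zero, so such a sum has at most k-1 real zeros.  It vanishes at
   p = 2, 4, ..., 2(k-1): by the symmetry j <-> 2k-j, S(2r) is half the 2k-th
   finite difference of the polynomial (k-y)^(2r), of degree 2r < 2k.  As
   2(k-1) < p <= 2k, a zero at p would be a k-th one. *)

(* Unlike [C], [binom n j] vanishes for [j > n], so Pascal's rule needs no side
   condition. *)
Fixpoint binom (n j : nat) : R :=
  match n, j with
  | O, O => 1
  | O, S _ => 0
  | S _, O => 1
  | S n', S j' => binom n' j' + binom n' (S j')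
  end.

Lemma binom_n0 n : binom n 0 = 1.
Proof. now destruct n. Qed.

Lemma binom_gt n j : (n < j)%nat -> binom n j = 0.
Proof.
  revert j; induction n as [|n IH]; intros [|j] Hj; simpl; try lia; trivial.
  rewrite !IH by lia; ring.
Qed.

Lemma C_n0 n : C n 0 = 1.
Proof. unfold C; rewrite Nat.sub_0_r; simpl; field; apply INR_fact_neq_0. Qed.

Lemma C_nn n : C n n = 1.
Proof. unfold C; rewrite Nat.sub_diag; simpl; field; apply INR_fact_neq_0. Qed.

Lemma binom_C n j : (j <= n)%nat -> binom n j = C n j.
Proof.
  revert j; induction n as [|n IH]; intros [|j] Hj.
  - now rewrite C_n0.
  - lia.
  - now rewrite C_n0.
  - simpl. destruct (Nat.eq_dec j n) as [->|Hne].
    + rewrite (binom_gt n (S n)), IH, !C_nn by lia; ring.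
    + rewrite !IH by lia; apply pascal; lia.
Qed.

Definition fdiff (n : nat) (f : R -> R) (x : R) : R :=
  sum_f_R0 (fun j => binom n j * (-1) ^ j * f (x + INR j)) n.

Lemma fdiff_ext n f g x : (forall y, f y = g y) -> fdiff n f x = fdiff n g x.
Proof. intro Hfg; unfold fdiff; apply sum_eq; intros j _; now rewrite Hfg. Qed.

Lemma fdiff_plus n f g x :
  fdiff n (fun y => f y + g y) x = fdiff n f x + fdiff n g x.
Proof. unfold fdiff; rewrite <- plus_sum; apply sum_eq; intros; ring. Qed.

Lemma fdiff_scal n a f x : fdiff n (fun y => a * f y) x = a * fdiff n f x.
Proof. unfold fdiff; rewrite scal_sum; apply sum_eq; intros; ring. Qed.

Lemma fdiff_S n f x : fdiff (S n) f x = fdiff n (fun y => f y - f (y + 1)) x.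
Proof.
  set (T := fun j => binom n j * (-1) ^ j * f (x + INR j)).
  assert (Hshift : sum_f_R0 (fun i => T (S i)) n = fdiff n f x - f x).
  { assert (Hsplit := decomp_sum T (S n) (Nat.lt_0_succ n)).
    rewrite tech5 in Hsplit; unfold T at 2 3 in Hsplit.
    rewrite binom_gt, binom_n0, Rplus_0_r in Hsplit by lia.
    unfold fdiff; simpl in Hsplit |- *; fold T; lra. }
  unfold fdiff at 1; rewrite decomp_sum by lia; simpl pred.
  rewrite (sum_eq _ (fun i => T (S i) - binom n i * (-1) ^ i * f (x + INR i + 1))).
  2:{ intros i _; unfold T; rewrite S_INR; simpl; rewrite Rplus_assoc; ring. }
  rewrite minus_sum, Hshift, binom_n0.
  unfold fdiff; cbv beta.
  rewrite (sum_eq (fun i => binom n i * (-1) ^ i * (f (x + INR i) - f (x + INR i + 1)))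
                  (fun i => binom n i * (-1) ^ i * f (x + INR i)
                              - binom n i * (-1) ^ i * f (x + INR i + 1))) by (intros; ring).
  rewrite minus_sum; simpl; rewrite Rplus_0_r; ring.
Qed.

Lemma fdiff_poly_of_pow n (a : nat -> R) N x :
  (forall i, (i <= N)%nat -> fdiff n (fun y => y ^ i) x = 0) ->
  fdiff n (fun y => sum_f_R0 (fun i => a i * y ^ i) N) x = 0.
Proof.
  intro Hpow; induction N as [|N IH].
  - cbn [sum_f_R0]; rewrite fdiff_scal, Hpow by lia; ring.
  - rewrite (fdiff_ext _ _ (fun y => sum_f_R0 (fun i => a i * y ^ i) N + a (S N) * y ^ S N))
      by (intro; apply tech5).
    rewrite fdiff_plus, fdiff_scal, IH, Hpow by auto; ring.
Qed.

Lemma pow_shift_sub_pow y m :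
  (y + 1) ^ S m - y ^ S m = sum_f_R0 (fun i => C (S m) i * y ^ i) m.
Proof.
  rewrite binomial, tech5, C_nn, Nat.sub_diag.
  rewrite (sum_eq _ (fun i => C (S m) i * y ^ i)) by (intros; rewrite pow1; ring).
  simpl; ring.
Qed.

Lemma fdiff_pow n m x : (m < n)%nat -> fdiff n (fun y => y ^ m) x = 0.
Proof.
  revert m x; induction n as [|n IH]; intros m x Hm; [lia|].
  rewrite fdiff_S; destruct m as [|m].
  - rewrite (fdiff_ext _ _ (fun _ => 0 * 1)) by (intro; simpl; ring).
    rewrite fdiff_scal; ring.
  - rewrite (fdiff_ext _ _ (fun y => -1 * sum_f_R0 (fun i => C (S m) i * y ^ i) m)).
    + rewrite fdiff_scal, fdiff_poly_of_pow; [ring|].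
      intros i Hi; apply IH; lia.
    + intro y; rewrite <- pow_shift_sub_pow; ring.
Qed.

Lemma fdiff_poly n (a : nat -> R) N x :
  (N < n)%nat -> fdiff n (fun y => sum_f_R0 (fun i => a i * y ^ i) N) x = 0.
Proof. intro HN; apply fdiff_poly_of_pow; intros; apply fdiff_pow; lia. Qed.

Lemma pow_even_sub_comm a b r : (a - b) ^ (2 * r) = (b - a) ^ (2 * r).
Proof. rewrite !pow_mult; f_equal; ring. Qed.

Lemma alt_binom_sum_even_pow k r : (r < k)%nat ->
  sum_f_R0 (fun j => C (2 * k) j * (-1) ^ j * (INR k - INR j) ^ (2 * r)) (2 * k) = 0.
Proof.
  intro Hrk.
  transitivity (fdiff (2 * k) (fun y => (INR k - y) ^ (2 * r)) 0).
  { unfold fdiff; apply sum_eq; intros j Hj; now rewrite binom_C, Rplus_0_l. }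
  rewrite (fdiff_ext _ _
    (fun y => sum_f_R0 (fun i => C (2 * r) i * (- INR k) ^ (2 * r - i) * y ^ i) (2 * r))).
  - apply fdiff_poly; lia.
  - intro y; rewrite pow_even_sub_comm, Rminus_def, binomial.
    apply sum_eq; intros; ring.
Qed.

Lemma sum_f_R0_rev a N : sum_f_R0 a N = sum_f_R0 (fun i => a (N - i)%nat) N.
Proof.
  revert a; induction N as [|N IH]; intro a; [reflexivity|].
  rewrite decomp_sum by lia; simpl pred.
  rewrite (IH (fun i => a (S i))), tech5, Nat.sub_diag.
  rewrite Rplus_comm; f_equal; apply sum_eq; intros i Hi; f_equal; lia.
Qed.

Lemma sum_f_R0_palindrome a K :
  (forall j, (j <= K)%nat -> a (2 * S K - j)%nat = a j) ->
  sum_f_R0 a (2 * S K) = 2 * sum_f_R0 a K + a (S K).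
Proof.
  intro Hsym.
  rewrite (tech2 a K (2 * S K)) by lia.
  replace (2 * S K - S K)%nat with (S K) by lia.
  rewrite (decomp_sum (fun i => a (S K + i)%nat)) by lia; simpl pred.
  rewrite Nat.add_0_r, (sum_f_R0_rev (fun i => a (S K + S i)%nat)).
  rewrite (sum_eq (fun i => a (S K + S (K - i))%nat) a); [ring|].
  intros i Hi; rewrite <- (Hsym i Hi); f_equal; lia.
Qed.

Lemma ceil_sum_even k r : (0 < r)%nat -> (r < k)%nat -> ceil_sum (INR (2 * r)) k = 0.
Proof.
  intros Hr Hrk; destruct k as [|K]; [lia|].
  set (a := fun j => C (2 * S K) j * (-1) ^ j * (INR (S K) - INR j) ^ (2 * r)).
  assert (Hfull : sum_f_R0 a (2 * S K) = 0) by exact (alt_binom_sum_even_pow _ _ Hrk).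
  rewrite sum_f_R0_palindrome in Hfull.
  2:{ intros j Hj; unfold a.
      rewrite <- pascal_step1 by lia.
      replace (2 * S K - j)%nat with (2 * (S K - j) + j)%nat by lia.
      rewrite pow_add, pow_mult, plus_INR, mult_INR, minus_INR by lia.
      replace ((-1) ^ 2) with 1 by ring.
      rewrite pow1, (pow_even_sub_comm (INR (S K)) (INR j)).
      f_equal; [ring | f_equal; simpl; ring]. }
  unfold a at 2 in Hfull; rewrite Rminus_diag, pow_i, Rmult_0_r, Rplus_0_r in Hfull by lia.
  unfold ceil_sum, sum_f; replace (S K - 1 - 0)%nat with K by lia.
  apply (Rmult_eq_reg_l 2); [|lra].
  rewrite Rmult_0_r, <- Hfull; f_equal; apply sum_eq; intros j Hj.
  unfold a; rewrite Nat.add_0_r, Rpower_pow; [reflexivity|].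
  apply Rlt_0_minus, lt_INR; lia.
Qed.

Definition expsum (a b : nat -> R) (n : nat) (x : R) : R :=
  sum_f_R0 (fun j => a j * exp (b j * x)) n.

Definition nondegenerate (a b : nat -> R) (n : nat) : Prop :=
  (forall j, (j <= n)%nat -> a j <> 0) /\
  (forall i j, (i <= n)%nat -> (j <= n)%nat -> b i = b j -> i = j).

Definition increasing_upto (z : nat -> R) (n : nat) : Prop :=
  forall i, (i < n)%nat -> z i < z (S i).

Lemma derivable_pt_lim_exp_term a b x :
  derivable_pt_lim (fun y => a * exp (b * y)) x (a * b * exp (b * x)).
Proof.
  replace (a * b * exp (b * x)) with (a * (exp (b * x) * (b * 1))) by ring.
  apply derivable_pt_lim_scal.
  apply (derivable_pt_lim_comp (fun y => b * y) exp).
  - apply derivable_pt_lim_scal, derivable_pt_lim_id.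
  - apply derivable_pt_lim_exp.
Qed.

Lemma expsum_derive a b n x :
  derivable_pt_lim (expsum a b n) x (expsum (fun j => a j * b j) b n x).
Proof.
  induction n as [|n IH].
  - apply derivable_pt_lim_exp_term.
  - apply (derivable_pt_lim_plus (expsum a b n) (fun y => a (S n) * exp (b (S n) * y))).
    + exact IH.
    + apply derivable_pt_lim_exp_term.
Qed.

Lemma expsum_shift a b n x :
  exp (- b 0%nat * x) * expsum a b (S n) x
  = a 0%nat + expsum (fun j => a (S j)) (fun j => b (S j) - b 0%nat) n x.
Proof.
  unfold expsum; rewrite decomp_sum by lia; simpl pred.
  rewrite Rmult_plus_distr_l, scal_sum; f_equal.
  - replace (- b 0%nat * x) with (- (b 0%nat * x)) by ring; rewrite exp_Ropp.
    field; apply Rgt_not_eq, exp_pos.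
  - apply sum_eq; intros j _.
    replace ((b (S j) - b 0%nat) * x) with (b (S j) * x + - b 0%nat * x) by ring.
    rewrite exp_plus; ring.
Qed.

Lemma nondegenerate_shift_derive a b n :
  nondegenerate a b (S n) ->
  nondegenerate (fun j => a (S j) * (b (S j) - b 0%nat)) (fun j => b (S j) - b 0%nat) n.
Proof.
  intros [Ha Hb]; split.
  - intros j Hj; apply Rmult_integral_contrapositive_currified.
    + apply Ha; lia.
    + intro Hbj; apply Rminus_diag_uniq in Hbj; apply Hb in Hbj; lia.
  - intros i j Hi Hj Hij.
    assert (S i = S j) by (apply Hb; [lia | lia | lra]); lia.
Qed.

Lemma rolle_interlace (g g' : R -> R) (z : nat -> R) n :
  (forall x, derivable_pt_lim g x (g' x)) ->
  increasing_upto z (S n) -> (forall i, (i <= S n)%nat -> g (z i) = 0) ->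
  exists w, increasing_upto w n /\ forall i, (i <= n)%nat -> g' (w i) = 0.
Proof.
  intros Hg Hz Hzero.
  assert (Hgap : forall i, exists c, (i <= n)%nat -> z i < c < z (S i) /\ g' c = 0).
  { intro i; destruct (Nat.le_gt_cases i n) as [Hi|Hi]; [|exists 0; intro; lia].
    assert (Hzi : z i < z (S i)) by (apply Hz; lia).
    destruct (MVT_cor2 g g' (z i) (z (S i)) Hzi) as [c [Hc Hci]]; [intros; apply Hg|].
    exists c; intros _; split; [exact Hci|].
    rewrite !Hzero in Hc by lia.
    apply (Rmult_eq_reg_r (z (S i) - z i)); lra. }
  destruct (functional_choice _ Hgap) as [w Hw].
  exists w; split.
  - intros i Hi.
    destruct (Hw i) as [[_ Hwi] _]; [lia|].
    destruct (Hw (S i)) as [[Hwi' _] _]; [lia|].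
    lra.
  - intros i Hi; apply (Hw i Hi).
Qed.

Lemma expsum_few_zeros a b n z :
  nondegenerate a b n -> increasing_upto z n ->
  (forall i, (i <= n)%nat -> expsum a b n (z i) = 0) -> False.
Proof.
  revert a b z; induction n as [|n IH]; intros a b z Hnd Hz Hzero.
  - apply (proj1 Hnd 0%nat); [lia|].
    specialize (Hzero 0%nat (le_n 0)); unfold expsum in Hzero; simpl in Hzero.
    apply Rmult_integral in Hzero as [Ha0|Hexp]; [exact Ha0|].
    exfalso; apply (Rgt_not_eq _ _ (exp_pos _) Hexp).
  - set (g := fun x => a 0%nat + expsum (fun j => a (S j)) (fun j => b (S j) - b 0%nat) n x).
    destruct (rolle_interlace g (expsum (fun j => a (S j) * (b (S j) - b 0%nat))
                                       (fun j => b (S j) - b 0%nat) n) z n)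
      as [w [Hw Hw0]].
    + intro x; unfold g; rewrite <- (Rplus_0_l (expsum _ _ n x)).
      apply derivable_pt_lim_plus; [apply derivable_pt_lim_const | apply expsum_derive].
    + exact Hz.
    + intros i Hi; unfold g; rewrite <- expsum_shift, Hzero by exact Hi; ring.
    + exact (IH _ _ w (nondegenerate_shift_derive _ _ _ Hnd) Hw Hw0).
Qed.

Lemma C_pos n j : 0 < C n j.
Proof.
  unfold C; apply Rdiv_lt_0_compat; [|apply Rmult_lt_0_compat]; apply INR_fact_lt_0.
Qed.

Lemma ceil_sum_expsum p n :
  ceil_sum p (S n)
  = expsum (fun j => C (2 * S n) j * (-1) ^ j) (fun j => ln (INR (S n) - INR j)) n p.
Proof.
  unfold ceil_sum, sum_f, expsum, Rpower; replace (S n - 1 - 0)%nat with n by lia.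
  apply sum_eq; intros j _; rewrite Nat.add_0_r, (Rmult_comm p); reflexivity.
Qed.

Lemma nondegenerate_ceil_sum n :
  nondegenerate (fun j => C (2 * S n) j * (-1) ^ j) (fun j => ln (INR (S n) - INR j)) n.
Proof.
  split.
  - intros j _; apply Rmult_integral_contrapositive_currified.
    + apply Rgt_not_eq, C_pos.
    + apply pow_nonzero; lra.
  - intros i j Hi Hj Hij; apply INR_eq.
    apply ln_inv in Hij; [lra | |]; apply Rlt_0_minus, lt_INR; lia.
Qed.

Theorem corollary3p8 (p : R) (k : nat) :
  0 < p -> ~ is_even_integer p -> is_ceil_nat (p / 2) k ->
  ceil_sum p k <> 0.
Proof.
  intros Hp _ [Hk1 Hk2] Hzero.
  destruct k as [|n]; [simpl in Hk2; lra|].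
  rewrite S_INR in Hk1, Hk2.
  assert (Heven_below : forall i, (i < n)%nat -> 2 * INR (S i) < p).
  { intros i Hi; apply le_INR in Hi; lra. }
  set (z := fun i => Rmin p (2 * INR (S i))).
  apply (expsum_few_zeros _ _ n z (nondegenerate_ceil_sum n)).
  - intros i Hi; unfold z; rewrite Rmin_right by (apply Rlt_le, Heven_below; lia).
    apply Rmin_glb_lt; [apply Heven_below; lia | rewrite (S_INR (S i)); lra].
  - intros i Hi; rewrite <- ceil_sum_expsum; unfold z.
    destruct (Nat.eq_dec i n) as [->|Hne].
    + rewrite Rmin_left by (rewrite S_INR; lra); exact Hzero.
    + rewrite Rmin_right by (apply Rlt_le, Heven_below; lia).
      rewrite <- (mult_INR 2); apply ceil_sum_even; lia.
Qed.
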